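(* Let $T$ be a real random variable with characteristic function $\Phi(\omega)=\mathbb E[e^{i\omega T}]$. Then for all real $\omega\neq 0$, $$\mathrm{cost}(T)=\langle|T|\rangle\ \ge\ \frac{1-|\Phi(\omega)|}{|\omega|}.$$
   Context: $\langle|T|\rangle=\mathbb E|T|$ denotes the expected absolute value of $T$ (possibly infinite). *)

From HB Require Import structures.
From mathcomp Require Import all_boot all_order all_algebra.
From mathcomp Require Import all_classical all_reals all_analysis.
From mathcomp Require Import complex.
Set Implicit Arguments. Unset Strict Implicit. Unset Printing Implicit Defensive.
Import Order.TTheory GRing.Theory Num.Theory.
Local Open Scope ring_scope.

(* Both expectations are finite (bounded integrands
   on a probability space), so [fine] just extracts the real value. *)
Definition charfun {d} {Omega : measurableType d} {R : realType}
  (P : probability Omega R) (X : Omega -> R) (w : R) : R[i] :=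
  Complex (fine ('E_P[fun x => cos (w * X x)])%E)
          (fine ('E_P[fun x => sin (w * X x)])%E).

(* Since 1 - cos x <= |x| for all real x, integrating 1 - cos (w T) gives
   1 - Re Phi(w) <= |w| E|T|, and |Phi(w)| >= Re Phi(w). *)
From HB Require Import structures.
From mathcomp Require Import all_boot all_order all_algebra.
From mathcomp Require Import all_classical all_reals all_analysis.
From mathcomp Require Import complex measurable_realfun.
Import Order.TTheory GRing.Theory Num.Theory.
Import numFieldNormedType.Exports.
Local Open Scope classical_set_scope.
Local Open Scope ring_scope.

(* Mean value theorem on [0, |x|], with |sin| <= 1. *)
Lemma one_sub_cos_le_norm (R : realType) (x : R) : 1 - cos x <= `|x|.
Proof.
rewrite -cos_norm.
have cos_der y : y \in `]0, `|x|[ -> is_derive y 1 (@cos R) (- sin y).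
  by move=> _; exact: is_derive_cos.
have [|c _] := MVT_segment (normr_ge0 x) cos_der.
  exact/continuous_subspaceT/continuous_cos.
rewrite cos0 subr0 => /eqP; rewrite subr_eq => /eqP ->.
rewrite mulNr opprD addrCA subrr addr0 opprK.
by rewrite ler_piMl // sin_le1.
Qed.

Lemma Re_le_normc (R : rcfType) (a b : R) :
  a <= ComplexField.Normc.normc (Complex a b).
Proof.
apply: le_trans (ler_norm a) _; rewrite /= -sqrtr_sqr.
by rewrite ler_sqrt ?lerDl ?sqr_ge0 // addr_ge0 ?sqr_ge0.
Qed.

Section expectation_cos.
Context d (Omega : measurableType d) (R : realType) (P : probability Omega R).
Variables (X : Omega -> R) (w : R).
Hypothesis mX : measurable_fun setT X.

Let cos_wX x := cos (w * X x).

Lemma measurable_cos_mul : measurable_fun setT cos_wX.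
Proof.
apply: measurableT_comp; last by apply: measurable_funM.
by apply: continuous_measurable_fun; exact: continuous_cos.
Qed.

Lemma integrable_cos_mul : P.-integrable setT (EFin \o cos_wX).
Proof.
apply: measurable_bounded_integrable => //.
- by rewrite [ltLHS]probability_setT ltry.
- exact: measurable_cos_mul.
- exists 1; split => // M M1 x _ /=.
  by rewrite (le_trans _ (ltW M1)) // /cos_wX cos_max.
Qed.

Lemma expectation_one_sub_cos_le :
  ((1 - fine 'E_P[cos_wX])%:E <= `|w|%:E * 'E_P[(fun x => `|X x|)%R])%E.
Proof.
rewrite unlock.
have -> : (1 - fine (\int[P]_x (cos_wX x)%:E))%:E
    = (\int[P]_x ((cst (1 : R) x)%:E - (cos_wX x)%:E))%E.
  have := expectation_cst P 1; rewrite unlock => int_one.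
  rewrite integralB_EFin ?integrable_cos_mul ?finite_measure_integrable_cst //.
  rewrite int_one EFinB fineK //.
  by apply: integrable_fin_num => //; exact: integrable_cos_mul.
have m_absX : measurable_fun setT (fun x => (`|X x|)%:E).
  by apply/measurable_EFinP; exact: measurableT_comp.
rewrite -(ge0_integralZl _ _ m_absX) //.
apply: ge0_le_integral => //.
- by move=> x _; rewrite lee_fin subr_ge0 cos_le1.
- by apply/measurable_EFinP/measurable_funB => //; exact: measurable_cos_mul.
- exact: emeasurable_funM.
- by move=> x _; rewrite -EFinM lee_fin -normrM; exact: one_sub_cos_le_norm.
Qed.

End expectation_cos.

Theorem theorem2 (d : measure_display) (Omega : measurableType d) (R : realType)
  (P : probability Omega R) (T : {RV P >-> R}) (w : R) :
  w != 0 ->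
  (((1 - ComplexField.Normc.normc (charfun P T w)) / `|w|)%:E <= 'E_P[(fun x => `|T x|)%R])%E.
Proof.
move=> w_neq0; have w_gt0 : 0 < `|w| by rewrite normr_gt0.
have mT : measurable_fun setT T by exact: measurable_funPT.
apply: (@le_trans _ _ ((1 - fine 'E_P[fun x => cos (w * T x)]) / `|w|)%:E).
  by rewrite lee_fin ler_wpM2r ?invr_ge0 // lerB // Re_le_normc.
rewrite mulrC EFinM lee_pdivrMl //.
exact: expectation_one_sub_cos_le.
Qed.
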